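(* Let $\mathbb{K}\in\{\mathbb{R},\mathbb{C}\}$, let $(X_c,\Lambda_c)\in\mathbb{K}^{n\times p}\times\mathbb{K}^{p\times p}$ be an invariant pair of $Q(\lambda)=\lambda^2M+\lambda D+K\in\mathbb{K}^{n\times n}[\lambda]$, and let $\Lambda_a\in\mathbb{K}^{p\times p}$ be such that $(X_c,\Lambda_a)$ is minimal. Then the perturbed polynomials $Q_\triangle(\lambda)=\lambda^2(M+\triangle M)+\lambda(D+\triangle D)+(K+\triangle K)\in\mathbb{K}^{n\times n}[\lambda]$ for which $(X_c,\Lambda_a)$ is an invariant pair are exactly those with $\triangle M=Z_1-WR(\Lambda_a^2)^*X_c^*$, $\triangle D=Z_2-WR\Lambda_a^*X_c^*$, $\triangle K=Z_3-WRX_c^*$, where $W=MX_c(\Lambda_a^2-\Lambda_c^2)+DX_c(\Lambda_a-\Lambda_c)+Z_1X_c\Lambda_a^2+Z_2X_c\Lambda_a+Z_3X_c$, $R=\big((X_c\Lambda_a^2)^*X_c\Lambda_a^2+(X_c\Lambda_a)^*X_c\Lambda_a+X_c^*X_c\big)^{-1}$, and $Z_1,Z_2,Z_3\in\mathbb{K}^{n\times n}$ are arbitrary.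
   Context: $A^*$ denotes the conjugate transpose. A pair $(X,\Lambda)\in\mathbb{K}^{n\times k}\times\mathbb{K}^{k\times k}$ is minimal if there is a positive integer $m$ such that $\begin{bmatrix}X\Lambda^{m-1}\\ \vdots\\ X\Lambda\\ X\end{bmatrix}$ has full column rank. A pair $(X,\Lambda)$ is an invariant pair of $\lambda^2M+\lambda D+K$ if $MX\Lambda^2+DX\Lambda+KX=0$.
   Formalization: The matrix $(X_c\Lambda_a^2)^*X_c\Lambda_a^2+(X_c\Lambda_a)^*X_c\Lambda_a+X_c^*X_c$ defining R is assumed invertible, besides minimality of $(X_c,\Lambda_a)$. The statement above fails without it. *)

From HB Require Import structures.
From mathcomp Require Import all_boot all_order all_algebra.
From mathcomp Require Import complex.
From mathcomp Require Import Rstruct.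
Set Implicit Arguments. Unset Strict Implicit. Unset Printing Implicit Defensive.
Import Order.TTheory GRing.Theory Num.Theory.
Local Open Scope ring_scope.

Section Defs.
Variable F : fieldType.

Definition mxpow (p : nat) (L : 'M[F]_p) (k : nat) : 'M[F]_p :=
  iter k (fun A => A *m L) 1%:M.

(* Star operation: A^* = (conj A)^T for a given field involution c
   (c = id over the reals, c = complex conjugation over C). *)
Definition cadj (c : F -> F) (m n : nat) (A : 'M[F]_(m, n)) : 'M[F]_(n, m) :=
  (map_mx c A)^T.

Definition invariant_pair (n p : nat) (M D K : 'M[F]_n)
  (X : 'M[F]_(n, p)) (L : 'M[F]_p) : Prop :=
  M *m X *m mxpow L 2 + D *m X *m L + K *m X = 0.

Definition minimal_pair (n p : nat) (X : 'M[F]_(n, p)) (L : 'M[F]_p) : Prop :=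
  exists m : nat, (0 < m)%N /\
    \rank (\mxcol_(i < m) (X *m mxpow L (m.-1 - i)) : 'M[F]_(\sum_(i < m) n, p))
      = p.

Definition theorem3p2_body (c : F -> F) : Prop :=
  forall (n p : nat) (M D K : 'M[F]_n) (Xc : 'M[F]_(n, p)) (Lc La : 'M[F]_p),
    invariant_pair M D K Xc Lc ->
    minimal_pair Xc La ->
    (* presupposition of the paper: the matrix inverted to define R exists *)
    (cadj c (Xc *m mxpow La 2) *m (Xc *m mxpow La 2)
       + cadj c (Xc *m La) *m (Xc *m La) + cadj c Xc *m Xc) \in unitmx ->
    forall dM dD dK : 'M[F]_n,
      invariant_pair (M + dM) (D + dD) (K + dK) Xc La <->
      exists Z1 Z2 Z3 : 'M[F]_n,
        let W := M *m Xc *m (mxpow La 2 - mxpow Lc 2) + D *m Xc *m (La - Lc)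
                 + Z1 *m Xc *m mxpow La 2 + Z2 *m Xc *m La + Z3 *m Xc in
        let R := invmx (cadj c (Xc *m mxpow La 2) *m (Xc *m mxpow La 2)
                        + cadj c (Xc *m La) *m (Xc *m La) + cadj c Xc *m Xc) in
        [/\ dM = Z1 - W *m R *m cadj c (mxpow La 2) *m cadj c Xc,
            dD = Z2 - W *m R *m cadj c La *m cadj c Xc
          & dK = Z3 - W *m R *m cadj c Xc].
End Defs.

From HB Require Import structures.
From mathcomp Require Import all_boot all_order all_algebra.
From mathcomp Require Import complex.
From mathcomp Require Import Rstruct.
Set Implicit Arguments. Unset Strict Implicit. Unset Printing Implicit Defensive.
Import GRing.Theory.
Local Open Scope ring_scope.

(* The residual of the perturbed polynomial at (X, La) is affine in the
   perturbation: it equals [dM dD dK] V + Q(X, La) with V the block column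
   [X La^2; X La; X], and invariance of (X, Lc) rewrites Q(X, La) as
   M X (La^2 - Lc^2) + D X (La - Lc).  Since V^* V = R^-1 is invertible,
   R V^* is a left inverse P of V, and the solutions of Y V + r = 0 are
   exactly Y = Z - (Z V + r) P for arbitrary Z: split Z into three blocks. *)

Lemma mulmx_add_eq0_parametrization (R : pzRingType) (n k p : nat)
    (V : 'M[R]_(k, p)) (P : 'M[R]_(p, k)) (r : 'M[R]_(n, p)) :
  P *m V = 1%:M ->
  forall Y : 'M[R]_(n, k), Y *m V + r = 0 <-> exists Z, Y = Z - (Z *m V + r) *m P.
Proof.
move=> PV Y; split=> [YV | [Z ->]]; first by exists Y; rewrite YV mul0mx subr0.
by rewrite mulmxBl -mulmxA PV mulmx1 opprD addrA subrr add0r addNr.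
Qed.

Lemma eq_row3_mx (T : Type) (m n1 n2 n3 : nat)
    (A1 B1 : 'M[T]_(m, n1)) (A2 B2 : 'M[T]_(m, n2)) (A3 B3 : 'M[T]_(m, n3)) :
  row_mx A1 (row_mx A2 A3) = row_mx B1 (row_mx B2 B3) <->
  [/\ A1 = B1, A2 = B2 & A3 = B3].
Proof. by split=> [/eq_row_mx[-> /eq_row_mx[-> ->]] | [-> -> ->]]. Qed.

Lemma exists_row3_mx (T : Type) (m n1 n2 n3 : nat)
    (P : 'M[T]_(m, n1 + (n2 + n3)) -> Prop) :
  (exists Z, P Z) <-> exists Z1 Z2 Z3, P (row_mx Z1 (row_mx Z2 Z3)).
Proof.
split=> [[Z PZ] | [Z1 [Z2 [Z3 PZ]]]]; last by exists (row_mx Z1 (row_mx Z2 Z3)).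
exists (lsubmx Z), (lsubmx (rsubmx Z)), (rsubmx (rsubmx Z)).
by rewrite !hsubmxK.
Qed.

Lemma cadj_col_mx (F : fieldType) (c : F -> F) (m1 m2 n : nat)
    (A1 : 'M[F]_(m1, n)) (A2 : 'M[F]_(m2, n)) :
  cadj c (col_mx A1 A2) = row_mx (cadj c A1) (cadj c A2).
Proof. by rewrite /cadj map_col_mx tr_col_mx. Qed.

Lemma cadjM (F : fieldType) (c : {rmorphism F -> F}) (m n k : nat)
    (A : 'M[F]_(m, n)) (B : 'M[F]_(n, k)) :
  cadj c (A *m B) = cadj c B *m cadj c A.
Proof. by rewrite /cadj map_mxM trmx_mul. Qed.

Section Residual.
Variables (F : fieldType) (n p : nat).
Implicit Types (M D K : 'M[F]_n) (X : 'M[F]_(n, p)) (L : 'M[F]_p).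

Definition residual M D K X L : 'M[F]_(n, p) :=
  M *m X *m mxpow L 2 + D *m X *m L + K *m X.

Definition stack X L : 'M[F]_(n + (n + n), p) :=
  col_mx (X *m mxpow L 2) (col_mx (X *m L) X).

Lemma residual_add M D K dM dD dK X L :
  residual (M + dM) (D + dD) (K + dK) X L
  = row_mx dM (row_mx dD dK) *m stack X L + residual M D K X L.
Proof.
rewrite /residual /stack; move: (mxpow L 2) => L2.
rewrite !mul_row_col !mulmxDl !mulmxA [RHS]addrC (addrA (dM *m X *m L2)).
by rewrite (addrACA (M *m X *m L2)) (addrACA (M *m X *m L2 + D *m X *m L)).
Qed.

Lemma residual_invariant_pair M D K X Lc La :
  invariant_pair M D K X Lc ->
  residual M D K X La
  = M *m X *m (mxpow La 2 - mxpow Lc 2) + D *m X *m (La - Lc).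
Proof.
move=> invc; rewrite -[LHS]subr0 -[X in _ - X]invc /residual !mulmxBr.
by rewrite opprD (addrACA (M *m X *m mxpow La 2 + _)) subrr addr0 opprD addrACA.
Qed.

Lemma invariant_pair_perturbed M D K dM dD dK X Lc La :
  invariant_pair M D K X Lc ->
  invariant_pair (M + dM) (D + dD) (K + dK) X La <->
  row_mx dM (row_mx dD dK) *m stack X La
    + (M *m X *m (mxpow La 2 - mxpow Lc 2) + D *m X *m (La - Lc)) = 0.
Proof. by move=> invc; rewrite -(residual_invariant_pair La invc) -residual_add. Qed.

End Residual.

Section Adjoint.
Variables (F : fieldType) (c : {rmorphism F -> F}) (n p : nat).
Implicit Types (X : 'M[F]_(n, p)) (L : 'M[F]_p).

Lemma cadj_stack X L :
  cadj c (stack X L)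
  = row_mx (cadj c (X *m mxpow L 2)) (row_mx (cadj c (X *m L)) (cadj c X)).
Proof. by rewrite /stack !cadj_col_mx. Qed.

Lemma stack_gram X L :
  cadj c (stack X L) *m stack X L
  = cadj c (X *m mxpow L 2) *m (X *m mxpow L 2)
    + cadj c (X *m L) *m (X *m L) + cadj c X *m X.
Proof. by rewrite cadj_stack /stack !mul_row_col addrA. Qed.

Lemma stack_solution_blocks (Z1 Z2 Z3 dM dD dK : 'M[F]_n) (r : 'M[F]_(n, p))
    (G : 'M[F]_p) X L :
  let W := r + Z1 *m X *m mxpow L 2 + Z2 *m X *m L + Z3 *m X in
  row_mx dM (row_mx dD dK)
    = row_mx Z1 (row_mx Z2 Z3)
      - (row_mx Z1 (row_mx Z2 Z3) *m stack X L + r) *m (G *m cadj c (stack X L))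
  <-> [/\ dM = Z1 - W *m G *m cadj c (mxpow L 2) *m cadj c X,
          dD = Z2 - W *m G *m cadj c L *m cadj c X
        & dK = Z3 - W *m G *m cadj c X].
Proof.
move=> W; have -> : row_mx Z1 (row_mx Z2 Z3) *m stack X L + r = W.
  rewrite /W /stack; move: (mxpow L 2) => L2.
  by rewrite !mul_row_col !mulmxA addrC !addrA.
by rewrite cadj_stack !mul_mx_row !opp_row_mx !add_row_mx eq_row3_mx !cadjM !mulmxA.
Qed.

End Adjoint.

(* Minimality of (X, La) only serves, in the paper, to make the Gram matrix
   V^* V invertible; the statement assumes that invertibility outright. *)
Theorem theorem3p2_body_rmorphism (F : fieldType) (c : {rmorphism F -> F}) :
  theorem3p2_body c.
Proof.
move=> n p M D K X Lc La invc _ gram_unit dM dD dK.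
rewrite -stack_gram in gram_unit *.
have left_inv : invmx (cadj c (stack X La) *m stack X La) *m cadj c (stack X La)
                *m stack X La = 1%:M by rewrite -mulmxA mulVmx.
apply: iff_trans (invariant_pair_perturbed _ _ _ La invc) _.
apply: iff_trans (mulmx_add_eq0_parametrization _ left_inv _) _.
apply: iff_trans (exists_row3_mx _) _.
by split=> -[Z1 [Z2 [Z3 /stack_solution_blocks sol]]]; exists Z1, Z2, Z3.
Qed.

Theorem theorem3p2 :
  theorem3p2_body (F := Rdefinitions.R) id /\
  theorem3p2_body (F := complex Rdefinitions.R) (@conjc Rdefinitions.R).
Proof.
split; first exact (@theorem3p2_body_rmorphism _ idfun).
exact: theorem3p2_body_rmorphism.
Qed.
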